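(* Let $\mathscr{S}\subset\mathbb{Z}^2$ be a finite set defining a non-trivial quarter-plane model, let $\theta^*$ be as in the context, and assume $m=\tan\theta^*$ is irrational. Then the language $\mathcal{L}_m$ over the alphabet $\mathscr{S}$ consisting of the words (step sequences) whose associated walks from the origin lie in $\mathrm{walks}(H_{\theta^*},\mathscr{S})$ is not context-free.
   Context: $H_\theta=\{(x,y):x\sin\theta+y\cos\theta\ge0\}$; $\mathrm{walks}(C,\mathscr{S})$ is the set of walks $x_0=(0,0),x_1,\dots,x_n$ ($n\ge0$) with $x_{j+1}-x_j\in\mathscr{S}$ and all $x_i\in C$. With $h^{\mathscr{S}}_n(\theta)=|\mathrm{walks}(H_\theta,\mathscr{S},n)|$ and $\rho(\theta)^{-1}=\lim_n h^{\mathscr{S}}_n(\theta)^{1/n}$, set $\theta^*=\arg\max_{0\le\theta\le\pi/2}\rho(\theta)$. The projected steps are $\mathscr{A}(\theta)=\{i\sin\theta+j\cos\theta:(i,j)\in\mathscr{S}\}$. Non-triviality is used in the form: there exist steps whose projections $a\in\mathscr{A}(\theta^* )$, $-b\in\mathscr{A}(\theta^* )$ satisfy $a>0$, $b>0$ and $a/b$ irrational. *)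

From Stdlib Require Import Reals ZArith List.
Import ListNotations.
Open Scope R_scope.

Definition pt := (Z * Z)%type.

Definition padd (p q : pt) : pt := ((fst p + fst q)%Z, (snd p + snd q)%Z).

Definition proj (theta : R) (p : pt) : R :=
  IZR (fst p) * sin theta + IZR (snd p) * cos theta.

Definition inH (theta : R) (p : pt) : Prop := 0 <= proj theta p.

Fixpoint walk_in_H (theta : R) (pos : pt) (w : list pt) : Prop :=
  inH theta pos /\
  match w with
  | [] => True
  | s :: w' => walk_in_H theta (padd pos s) w'
  end.

Definition inHb (theta : R) (p : pt) : bool :=
  if Rle_dec 0 (proj theta p) then true else false.

Fixpoint walk_in_Hb (theta : R) (pos : pt) (w : list pt) : bool :=
  inHb theta pos &&
  match w with
  | [] => true
  | s :: w' => walk_in_Hb theta (padd pos s) w'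
  end.

Fixpoint words (S : list pt) (n : nat) : list (list pt) :=
  match n with
  | O => [ [] ]
  | Datatypes.S n' => flat_map (fun s => map (cons s) (words S n')) S
  end.

(** h_n^S(theta) = |walks(H_theta, S, n)|  (S given as a duplicate-free list). *)
Definition h (S : list pt) (theta : R) (n : nat) : nat :=
  length (filter (walk_in_Hb theta (0%Z, 0%Z)) (words S n)).

Definition nroot (x : R) (n : nat) : R :=
  if Rlt_dec 0 x then Rpower x (/ INR n) else 0.

(** [growth S theta g] : h_n(theta)^{1/n} -> g, i.e. g = rho(theta)^{-1}. *)
Definition growth (S : list pt) (theta : R) (g : R) : Prop :=
  Un_cv (fun n => nroot (INR (h S theta (Datatypes.S n))) (Datatypes.S n)) g.

Definition irrational (x : R) : Prop :=
  ~ exists p q : Z, q <> 0%Z /\ x = IZR p / IZR q.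

(** Context-free grammars over a terminal type T, nonterminals indexed by nat
    (a grammar has finitely many rules, hence finitely many nonterminals). *)
Record cfg (T : Type) := mkCfg {
  cfg_start : nat;
  cfg_rules : list (nat * list (nat + T))
}.
Arguments cfg_start {T} _.
Arguments cfg_rules {T} _.

Inductive gen {T : Type} (G : cfg T) : nat -> list T -> Prop :=
| gen_rule A rhs w :
    In (A, rhs) (cfg_rules G) -> gens G rhs w -> gen G A w
with gens {T : Type} (G : cfg T) : list (nat + T) -> list T -> Prop :=
| gens_nil : gens G [] []
| gens_term t r w : gens G r w -> gens G (inr t :: r) (t :: w)
| gens_nonterm B r w1 w2 :
    gen G B w1 -> gens G r w2 -> gens G (inl B :: r) (w1 ++ w2).

Definition language_of {T : Type} (G : cfg T) (w : list T) : Prop :=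
  gen G (cfg_start G) w.

Definition context_free {T : Type} (L : list T -> Prop) : Prop :=
  exists G : cfg T, forall w, language_of G w <-> L w.

Definition Lm (S : list pt) (theta : R) (w : list pt) : Prop :=
  (forall s, In s w -> In s S) /\ walk_in_H theta (0%Z, 0%Z) w.

(* If [Lm S th] were context-free, the pumping lemma would apply to a long word
   [u^n v^k] made of a step [u] of height [a > 0] followed by a step [v] of height
   [-b < 0]. As [a / b] is irrational, the heights [c a - e b] of pumpable factors
   (with [c, e] bounded by the pumping constant, not both 0) stay at distance at
   least some [d > 0] from 0, while density of [a Z + b Z] lets us choose the endpoint
   height [n a - k b] in [[0, d)]. Pumping the factors out (if their height is
   positive) or in twice (if negative) then ends the walk below the line. *)

From Stdlib Require Import Reals ZArith List Lia Lra Classical.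
Import ListNotations.
Open Scope R_scope.

Scheme gen_mut := Induction for gen Sort Prop
with gens_mut := Induction for gens Sort Prop.

Fixpoint list_pow {A : Type} (l : list A) (i : nat) : list A :=
  match i with O => [] | Datatypes.S i' => l ++ list_pow l i' end.

Lemma list_pow_S_r {A : Type} (l : list A) (i : nat) :
  list_pow l (Datatypes.S i) = list_pow l i ++ l.
Proof.
  induction i as [|i IH]; [simpl; now rewrite app_nil_r|].
  change (l ++ list_pow l (Datatypes.S i) = (l ++ list_pow l i) ++ l).
  now rewrite IH, app_assoc.
Qed.

Section Pumping.
Local Open Scope nat_scope.
Context {T : Type} (G : cfg T).

Definition nonterminals : list nat := map fst (cfg_rules G).

Definition rule_width : nat :=
  Datatypes.S (list_max (map (fun r => length (snd r)) (cfg_rules G))).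

Definition pump_length : nat := rule_width ^ length nonterminals.

Definition pumpable (A : nat) (w : list T) : Prop :=
  exists x y z t r, w = x ++ y ++ z ++ t ++ r /\ 1 <= length (y ++ t) /\
    length (y ++ z ++ t) <= rule_width * pump_length /\
    forall i, gen G A (x ++ list_pow y i ++ z ++ list_pow t i ++ r).

Definition pumpable_seq (rhs : list (nat + T)) (w : list T) : Prop :=
  exists x y z t r, w = x ++ y ++ z ++ t ++ r /\ 1 <= length (y ++ t) /\
    length (y ++ z ++ t) <= rule_width * pump_length /\
    forall i, gens G rhs (x ++ list_pow y i ++ z ++ list_pow t i ++ r).

Definition anchored (A : nat) (w : list T) (B : nat) : Prop :=
  exists y z t, w = y ++ z ++ t /\ gen G B z /\
    forall z', gen G B z' -> gen G A (y ++ z' ++ t).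

Definition anchored_seq (rhs : list (nat + T)) (w : list T) (B : nat)
    (strict : bool) : Prop :=
  exists y z t, w = y ++ z ++ t /\ gen G B z /\
    (forall z', gen G B z' -> gens G rhs (y ++ z' ++ t)) /\
    (strict = true -> 1 <= length (y ++ t)).

(* Invariant of the pumping argument: distinct nonterminals [P] on one path below
   [A], each re-derivable in its context, with [w] no longer than [rule_width ^ |P|].
   Meeting a member of [P] again above a nonempty context yields a short pump. *)
Definition spine (A : nat) (w : list T) : Prop :=
  exists P, NoDup P /\ incl P nonterminals /\ length w <= rule_width ^ length P /\
    forall B, In B P -> anchored A w B.

(* For a sentential form: either [w] is no longer than [M] or every context on the
   path is nonempty; in both cases [w] is at most [length rhs] pieces of size [M]. *)
Definition spine_seq (rhs : list (nat + T)) (w : list T) : Prop :=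
  exists P M strict, NoDup P /\ incl P nonterminals /\ M <= rule_width ^ length P /\
    length w <= length rhs * M /\ (strict = false -> length w <= M) /\
    forall B, In B P -> anchored_seq rhs w B strict.

Lemma rhs_lt_rule_width A rhs :
  In (A, rhs) (cfg_rules G) -> length rhs < rule_width.
Proof.
  intro H; unfold rule_width; apply Nat.lt_succ_r.
  refine (proj1 (Forall_forall _ _) (proj1 (list_max_le _ _) (le_n _)) _ _).
  apply in_map_iff; now exists (A, rhs).
Qed.

Lemma rule_width_pow_le P :
  NoDup P -> incl P nonterminals -> rule_width ^ length P <= pump_length.
Proof.
  intros HP Hincl; apply Nat.pow_le_mono_r; [unfold rule_width; lia|].
  now apply NoDup_incl_length.
Qed.

Lemma gen_pow A rhs y z t :
  In (A, rhs) (cfg_rules G) ->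
  (forall z', gen G A z' -> gens G rhs (y ++ z' ++ t)) -> gen G A z ->
  forall i, gen G A (list_pow y i ++ z ++ list_pow t i).
Proof.
  intros HA Hctx Hz i; induction i as [|i IH]; [simpl; now rewrite app_nil_r|].
  replace (list_pow y (Datatypes.S i) ++ z ++ list_pow t (Datatypes.S i))
    with (y ++ (list_pow y i ++ z ++ list_pow t i) ++ t)
    by (rewrite (list_pow_S_r t); simpl; now rewrite !app_assoc).
  exact (gen_rule G A rhs _ HA (Hctx _ IH)).
Qed.

Lemma anchored_rule A rhs w B strict :
  In (A, rhs) (cfg_rules G) -> anchored_seq rhs w B strict -> anchored A w B.
Proof.
  intros HA (y & z & t & E & Hz & Hctx & _).
  exists y, z, t; repeat split; auto; intros z' Hz'.
  exact (gen_rule G A rhs _ HA (Hctx _ Hz')).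
Qed.

Lemma anchored_refl A w : gen G A w -> anchored A w A.
Proof.
  exists [], w, []; rewrite app_nil_r; repeat split; auto.
  intros z' Hz'; now rewrite app_nil_r.
Qed.

Lemma spine_rule A rhs w :
  In (A, rhs) (cfg_rules G) -> gens G rhs w -> spine_seq rhs w ->
  pumpable A w \/ spine A w.
Proof.
  intros HA Hw (P & M & [|] & HP & Hincl & HM & Hlen & Hshort & Hanch).
  - assert (Hgrow : length w <= rule_width * rule_width ^ length P).
    { pose proof (rhs_lt_rule_width A rhs HA).
      apply (Nat.le_trans _ _ _ Hlen), Nat.mul_le_mono; lia. }
    destruct (in_dec Nat.eq_dec A P) as [HAP|HAP].
    + left; destruct (Hanch A HAP) as (y & z & t & -> & Hz & Hctx & Hyt).
      exists [], y, z, t, []; repeat split; auto.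
      * now rewrite app_nil_r.
      * pose proof (rule_width_pow_le P HP Hincl); nia.
      * intro i; rewrite app_nil_r; exact (gen_pow A rhs y z t HA Hctx Hz i).
    + right; exists (A :: P); repeat split.
      * now constructor.
      * apply incl_cons; [apply in_map_iff; now exists (A, rhs)|exact Hincl].
      * cbn [length]; now rewrite Nat.pow_succ_r'.
      * intros B [<-|HB]; [apply anchored_refl; exact (gen_rule G A rhs w HA Hw)|].
        exact (anchored_rule A rhs w B true HA (Hanch B HB)).
  - right; exists P; repeat split; auto.
    + specialize (Hshort eq_refl); lia.
    + intros B HB; exact (anchored_rule A rhs w B false HA (Hanch B HB)).
Qed.

Lemma pumpable_rule A rhs w :
  In (A, rhs) (cfg_rules G) -> pumpable_seq rhs w -> pumpable A w.
Proof.
  intros HA (x & y & z & t & r & E & H1 & H2 & Hi).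
  exists x, y, z, t, r; repeat split; auto; intro i; exact (gen_rule G A rhs _ HA (Hi i)).
Qed.

Lemma spine_seq_nil : spine_seq [] [].
Proof.
  exists [], 0, false; repeat split; simpl; try lia; [apply NoDup_nil|intros ? []].
Qed.

Lemma pumpable_seq_term c r w :
  pumpable_seq r w -> pumpable_seq (inr c :: r) (c :: w).
Proof.
  intros (x & y & z & t & s & -> & H1 & H2 & Hi).
  exists (c :: x), y, z, t, s; repeat split; auto; intro i; now constructor.
Qed.

Lemma spine_seq_term c r w :
  spine_seq r w -> spine_seq (inr c :: r) (c :: w).
Proof.
  intros (P & M & strict & HP & Hincl & HM & Hlen & Hshort & Hanch).
  destruct w as [|c' w].
  - exists [], 1, false; repeat split; simpl; try lia; [apply NoDup_nil|intros ? []].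
  - exists P, M, true; repeat split; auto.
    + simpl in *; nia.
    + easy.
    + intros B HB; destruct (Hanch B HB) as (y & z & t & E & Hz & Hctx & _).
      exists (c :: y), z, t; repeat split; auto.
      * now rewrite E.
      * intros z' Hz'; constructor; now apply Hctx.
      * intros _; simpl; lia.
Qed.

Lemma pumpable_seq_nonterm_l B r w1 w2 :
  pumpable B w1 -> gens G r w2 -> pumpable_seq (inl B :: r) (w1 ++ w2).
Proof.
  intros (x & y & z & t & s & -> & H1 & H2 & Hi) Hw2.
  exists x, y, z, t, (s ++ w2); repeat split; auto.
  - now rewrite !app_assoc.
  - intro i.
    replace (x ++ list_pow y i ++ z ++ list_pow t i ++ s ++ w2)
      with ((x ++ list_pow y i ++ z ++ list_pow t i ++ s) ++ w2) by now rewrite <- !app_assoc.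
    now apply gens_nonterm.
Qed.

Lemma pumpable_seq_nonterm_r B r w1 w2 :
  gen G B w1 -> pumpable_seq r w2 -> pumpable_seq (inl B :: r) (w1 ++ w2).
Proof.
  intros Hw1 (x & y & z & t & s & -> & H1 & H2 & Hi).
  exists (w1 ++ x), y, z, t, s; repeat split; auto.
  - now rewrite !app_assoc.
  - intro i; rewrite <- app_assoc; now constructor.
Qed.

Lemma anchored_seq_nonterm_l B r w1 w2 C strict :
  anchored B w1 C -> gens G r w2 -> (strict = true -> w2 <> []) ->
  anchored_seq (inl B :: r) (w1 ++ w2) C strict.
Proof.
  intros (y & z & t & -> & Hz & Hctx) Hw2 Hstrict.
  exists y, z, (t ++ w2); repeat split; auto.
  - now rewrite !app_assoc.
  - intros z' Hz'; rewrite !app_assoc, <- (app_assoc y); constructor; auto.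
  - intro Hs; destruct w2; [now destruct (Hstrict Hs)|rewrite !length_app; simpl; lia].
Qed.

Lemma anchored_seq_nonterm_r B r w1 w2 C strict strict' :
  gen G B w1 -> anchored_seq r w2 C strict ->
  (strict' = true -> strict = true \/ w1 <> []) ->
  anchored_seq (inl B :: r) (w1 ++ w2) C strict'.
Proof.
  intros Hw1 (y & z & t & -> & Hz & Hctx & Hyt) Hstrict.
  exists (w1 ++ y), z, t; repeat split; auto.
  - now rewrite !app_assoc.
  - intros z' Hz'; rewrite <- app_assoc; constructor; auto.
  - intro Hs; destruct (Hstrict Hs) as [Hs'|Hne]; rewrite !length_app.
    + specialize (Hyt Hs'); rewrite length_app in Hyt; lia.
    + destruct w1; [easy|simpl; lia].
Qed.

Lemma spine_seq_nonterm B r w1 w2 :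
  gen G B w1 -> gens G r w2 -> spine B w1 -> spine_seq r w2 ->
  spine_seq (inl B :: r) (w1 ++ w2).
Proof.
  intros Hw1 Hw2 (P1 & HP1 & Hincl1 & Hlen1 & Hanch1)
    (P2 & M2 & strict & HP2 & Hincl2 & HM2 & Hlen2 & Hshort2 & Hanch2).
  unfold spine_seq; cbn [length]; rewrite length_app.
  destruct w1 as [|c1 w1'].
  { exists P2, M2, strict; repeat split; simpl; auto; try lia.
    intros C HC; apply (anchored_seq_nonterm_r B r [] w2 C strict); auto. }
  destruct w2 as [|c2 w2'].
  { exists P1, (length (c1 :: w1')), false.
    repeat split; auto; try (simpl in *; lia).
    intros C HC; apply anchored_seq_nonterm_l; auto; easy. }
  set (w1 := c1 :: w1') in *; set (w2 := c2 :: w2') in *.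
  destruct (le_lt_dec M2 (length w1)) as [Hle|Hlt].
  - exists P1, (length w1), true; repeat split; auto; [nia|easy|].
    intros C HC; apply anchored_seq_nonterm_l; auto; easy.
  - exists P2, M2, true; repeat split; auto; [nia|easy|].
    intros C HC; apply (anchored_seq_nonterm_r B r w1 w2 C strict); auto.
    intros _; right; easy.
Qed.

Lemma pumpable_or_spine A w : gen G A w -> pumpable A w \/ spine A w.
Proof.
  revert A w.
  apply (gen_mut T G (fun A w _ => pumpable A w \/ spine A w)
                     (fun rhs w _ => pumpable_seq rhs w \/ spine_seq rhs w)).
  - intros A rhs w HA Hw [Hp|Hs]; [left; exact (pumpable_rule A rhs w HA Hp)|].
    exact (spine_rule A rhs w HA Hw Hs).
  - right; exact spine_seq_nil.
  - intros c r w _ [Hp|Hs]; [left; now apply pumpable_seq_term|right; now apply spine_seq_term].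
  - intros B r w1 w2 Hw1 IH1 Hw2 IH2.
    destruct IH2 as [Hp2|Hs2]; [left; now apply pumpable_seq_nonterm_r|].
    destruct IH1 as [Hp1|Hs1]; [left; now apply pumpable_seq_nonterm_l|].
    right; now apply spine_seq_nonterm.
Qed.

Theorem pumping_lemma w :
  language_of G w -> pump_length < length w -> pumpable (cfg_start G) w.
Proof.
  intros Hw Hlen; destruct (pumpable_or_spine _ _ Hw) as [Hp|(P & HP & Hincl & HwP & _)];
    [exact Hp|].
  pose proof (rule_width_pow_le P HP Hincl); lia.
Qed.

End Pumping.
Lemma Zfloor_mul (z x : R) : 0 < x -> exists q : Z, IZR q * x <= z < IZR q * x + x.
Proof.
  intro Hx; destruct (archimed (z / x)) as [H1 H2].
  exists (up (z / x) - 1)%Z; rewrite minus_IZR.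
  assert (E : z = z / x * x) by (field; lra).
  split; nra.
Qed.

Lemma lincomb_neq0 (a b : R) (c d : nat) : 0 < a -> 0 < b -> irrational (a / b) ->
  (1 <= c + d)%nat -> INR c * a - INR d * b <> 0.
Proof.
  intros Ha Hb Hirr Hcd E; destruct c as [|c].
  - assert (0 < INR d) by (apply lt_0_INR; lia); simpl in E; nra.
  - apply Hirr; exists (Z.of_nat d), (Z.of_nat (Datatypes.S c)); split; [lia|].
    rewrite <- !INR_IZR_INZ.
    assert (0 < INR (Datatypes.S c)) by (apply lt_0_INR; lia).
    field_simplify_eq; lra.
Qed.

Definition lincomb (a b x : R) : Prop := exists n k : Z, x = IZR n * a + IZR k * b.

Lemma lincomb_sub a b x y : lincomb a b x -> lincomb a b y -> lincomb a b (x - y).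
Proof.
  intros (n1 & k1 & ->) (n2 & k2 & ->); exists (n1 - n2)%Z, (k1 - k2)%Z.
  rewrite !minus_IZR; ring.
Qed.

Lemma lincomb_Zmul a b q x : lincomb a b x -> lincomb a b (IZR q * x).
Proof.
  intros (n & k & ->); exists (q * n)%Z, (q * k)%Z; rewrite !mult_IZR; ring.
Qed.

(* The group [a Z + b Z] has a least positive element unless it is dense; in the
   former case [a] and [b] are integer multiples of it. *)
Lemma small_positive_lincomb (a b : R) : 0 < a -> 0 < b -> irrational (a / b) ->
  forall eps, 0 < eps -> exists n k : Z, 0 < IZR n * a + IZR k * b < eps.
Proof.
  intros Ha Hb Hirr eps Heps; apply NNPP; intro Hsparse.
  assert (Hgap : forall x, lincomb a b x -> ~ (0 < x < eps))
    by (intros x (n & k & ->) Hx; apply Hsparse; eauto).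
  set (E := fun y => lincomb a b (- y) /\ 0 < - y).
  destruct (completeness E) as [m [Hub Hlub]].
  { exists 0; intros y [_ Hy]; lra. }
  { exists (- a); split; [exists 1%Z, 0%Z; simpl; ring|lra]. }
  assert (Hinf : forall z, lincomb a b z -> 0 < z -> - m <= z).
  { intros z Hz Hz0; enough (- z <= m) by lra.
    apply Hub; split; [now rewrite Ropp_involutive|lra]. }
  assert (Hx : exists x, lincomb a b x /\ 0 < x < - m + eps).
  { apply NNPP; intro Hn; enough (m <= m - eps) by lra.
    apply Hlub; intros y [Hy Hy0]; apply Rnot_lt_le; intro Hlt.
    apply Hn; exists (- y); split; [exact Hy|lra]. }
  destruct Hx as (x & Hx & Hx0 & Hxm).
  assert (Hmul : forall z, lincomb a b z -> exists q : Z, z = IZR q * x).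
  { intros z Hz; destruct (Zfloor_mul z x Hx0) as [q Hq]; exists q.
    destruct (Req_dec (z - IZR q * x) 0) as [E0|E0]; [lra|exfalso].
    assert (Hrem : lincomb a b (z - IZR q * x)) by now apply lincomb_sub, lincomb_Zmul.
    pose proof (Hinf _ Hrem ltac:(lra)).
    apply (Hgap (x - (z - IZR q * x))); [now apply lincomb_sub|lra]. }
  destruct (Hmul a) as [q1 Hq1]; [exists 1%Z, 0%Z; simpl; ring|].
  destruct (Hmul b) as [q2 Hq2]; [exists 0%Z, 1%Z; simpl; ring|].
  assert (IZR q2 <> 0) by (intro Hq; rewrite Hq in Hq2; lra).
  apply Hirr; exists q1, q2; split; [intros ->; auto|].
  rewrite Hq1, Hq2; field; split; lra.
Qed.

Lemma lincomb_density (a b : R) : 0 < a -> 0 < b -> irrational (a / b) ->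
  forall eta, 0 < eta -> forall N : nat,
  exists n k : nat, (N <= n)%nat /\ 0 <= INR n * a - INR k * b < eta.
Proof.
  intros Ha Hb Hirr eta Heta N.
  destruct (small_positive_lincomb a b Ha Hb Hirr (Rmin eta b)) as (n0 & k0 & Hg);
    [now apply Rmin_glb_lt|].
  set (g := IZR n0 * a + IZR k0 * b) in *.
  pose proof (Rmin_l eta b); pose proof (Rmin_r eta b).
  (* Start from some [N1 >= N] and subtract [j <= J] copies of [g]; [J] bounds the
     number of copies of [g] that fit in [b], which keeps the [a]-coefficient
     at least [N]. *)
  destruct (Zfloor_mul b g) as [J HJ]; [lra|].
  set (N1 := (Z.of_nat N + J * Z.abs n0)%Z).
  destruct (Zfloor_mul (IZR N1 * a) b Hb) as [K1 HK1].
  set (r := IZR N1 * a - IZR K1 * b).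
  destruct (Zfloor_mul r g) as [j Hj]; [lra|].
  assert (Hj0 : (0 <= j)%Z).
  { apply Z.lt_succ_r, lt_IZR; rewrite succ_IZR; unfold r in Hj; nra. }
  assert (HjJ : (j <= J)%Z).
  { apply Z.lt_succ_r, lt_IZR; rewrite succ_IZR; unfold r in Hj; nra. }
  set (n := (N1 - j * n0)%Z); set (k := (K1 + j * k0)%Z).
  assert (Hval : IZR n * a - IZR k * b = r - IZR j * g).
  { unfold n, k, r, g; rewrite minus_IZR, plus_IZR, !mult_IZR; ring. }
  assert (HnN : (Z.of_nat N <= n)%Z).
  { unfold n, N1; enough (j * n0 <= J * Z.abs n0)%Z by lia.
    destruct (Z.abs_spec n0) as [[? ->]|[? ->]]; nia. }
  assert (Hk0 : (0 <= k)%Z).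
  { assert (0 <= IZR n) by (apply IZR_le; lia).
    apply Z.lt_succ_r, lt_IZR; rewrite succ_IZR; simpl; nra. }
  exists (Z.to_nat n), (Z.to_nat k); split; [lia|].
  rewrite !INR_IZR_INZ, !Z2Nat.id by lia; lra.
Qed.

Lemma uniform_positive_radius (Q : nat -> R -> Prop) (K : nat) :
  (forall i d d', Q i d -> 0 < d' <= d -> Q i d') ->
  (forall i, (i <= K)%nat -> exists d, 0 < d /\ Q i d) ->
  exists d, 0 < d /\ forall i, (i <= K)%nat -> Q i d.
Proof.
  intros Hmono; induction K as [|K IH]; intros H.
  - destruct (H 0%nat (le_n _)) as (d & Hd & HQ); exists d; split; [exact Hd|].
    intros i Hi; replace i with 0%nat by lia; exact HQ.
  - destruct IH as (d1 & Hd1 & HQ1); [intros i Hi; apply H; lia|].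
    destruct (H (Datatypes.S K) (le_n _)) as (d2 & Hd2 & HQ2).
    assert (Hpos : 0 < Rmin d1 d2) by now apply Rmin_glb_lt.
    exists (Rmin d1 d2); split; [exact Hpos|]; intros i Hi.
    destruct (Nat.eq_dec i (Datatypes.S K)) as [->|Hne].
    + apply (Hmono _ d2); [exact HQ2|split; [exact Hpos|apply Rmin_r]].
    + apply (Hmono _ d1); [apply HQ1; lia|split; [exact Hpos|apply Rmin_l]].
Qed.

Lemma lincomb_gap (a b : R) (K : nat) : 0 < a -> 0 < b -> irrational (a / b) ->
  exists d, 0 < d /\ forall c, (c <= K)%nat -> forall e, (e <= K)%nat ->
    (1 <= c + e)%nat -> d <= Rabs (INR c * a - INR e * b).
Proof.
  intros Ha Hb Hirr.
  apply (uniform_positive_radius (fun c d => forall e, (e <= K)%nat -> (1 <= c + e)%nat ->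
           d <= Rabs (INR c * a - INR e * b))).
  { intros c d d' H1 H2 e He Hce; specialize (H1 e He Hce); lra. }
  intros c _.
  apply (uniform_positive_radius (fun e d => (1 <= c + e)%nat ->
           d <= Rabs (INR c * a - INR e * b))).
  { intros e d d' H1 H2 Hce; specialize (H1 Hce); lra. }
  intros e _; destruct (le_lt_dec 1 (c + e)) as [Hce|Hce].
  - exists (Rabs (INR c * a - INR e * b)); split; [|intros _; lra].
    apply Rabs_pos_lt, lincomb_neq0; assumption.
  - exists 1; split; [lra|intro; lia].
Qed.

Definition proj_sum (th : R) (w : list pt) : R :=
  fold_right (fun s acc => proj th s + acc) 0 w.

Lemma proj_sum_app th w1 w2 : proj_sum th (w1 ++ w2) = proj_sum th w1 + proj_sum th w2.
Proof. induction w1 as [|s w1 IH]; simpl; [ring|]; rewrite IH; ring. Qed.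

Lemma proj_sum_pow th w i : proj_sum th (list_pow w i) = INR i * proj_sum th w.
Proof.
  induction i as [|i IH]; [simpl; ring|].
  cbn [list_pow]; rewrite proj_sum_app, IH, S_INR; ring.
Qed.

Lemma proj_sum_repeat th s n : proj_sum th (repeat s n) = INR n * proj th s.
Proof.
  induction n as [|n IH]; [simpl; ring|].
  cbn [repeat]; change (proj th s + proj_sum th (repeat s n) = INR (Datatypes.S n) * proj th s).
  rewrite IH, S_INR; ring.
Qed.

Lemma proj_padd th p q : proj th (padd p q) = proj th p + proj th q.
Proof. unfold proj, padd; simpl; rewrite !plus_IZR; ring. Qed.

Lemma proj_origin th : proj th (0%Z, 0%Z) = 0.
Proof. unfold proj; simpl; ring. Qed.

Lemma walk_in_H_endpoint th pos w :
  walk_in_H th pos w -> 0 <= proj th pos + proj_sum th w.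
Proof.
  revert pos; induction w as [|s w IH]; intros pos [Hpos Hw]; simpl.
  - unfold inH in Hpos; lra.
  - specialize (IH _ Hw); rewrite proj_padd in IH; fold (proj_sum th w); lra.
Qed.

Lemma walk_in_H_repeat_down th pos v k : proj th v <= 0 ->
  0 <= proj th pos + INR k * proj th v -> walk_in_H th pos (repeat v k).
Proof.
  revert pos; induction k as [|k IH]; intros pos Hv Hend; simpl.
  - split; [unfold inH; simpl in Hend; lra|exact I].
  - rewrite S_INR in Hend; pose proof (pos_INR k); split.
    + unfold inH; nra.
    + apply IH; [exact Hv|rewrite proj_padd; lra].
Qed.

(* Going up then down, the walk is lowest at one of its two ends. *)
Lemma walk_in_H_up_down th pos u v n k : 0 < proj th u -> proj th v <= 0 ->
  0 <= proj th pos -> 0 <= proj th pos + INR n * proj th u + INR k * proj th v ->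
  walk_in_H th pos (repeat u n ++ repeat v k).
Proof.
  revert pos; induction n as [|n IH]; intros pos Hu Hv Hpos Hend; simpl.
  - apply walk_in_H_repeat_down; [exact Hv|simpl in Hend; lra].
  - rewrite S_INR in Hend; split; [exact Hpos|].
    apply IH; rewrite ?proj_padd; lra.
Qed.

Lemma proj_sum_two_letters th u v w : (forall s, In s w -> s = u \/ s = v) ->
  exists c e : nat, (c + e = length w)%nat /\
    proj_sum th w = INR c * proj th u + INR e * proj th v.
Proof.
  induction w as [|s w IH]; intro Hw; [exists 0%nat, 0%nat; split; [easy|simpl; ring]|].
  destruct IH as (c & e & Hlen & Hsum); [intros x Hx; apply Hw; now right|].
  change (proj_sum th (s :: w)) with (proj th s + proj_sum th w); rewrite Hsum.
  destruct (Hw s (or_introl eq_refl)) as [->| ->].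
  - exists (Datatypes.S c), e; split; [simpl; lia|rewrite S_INR; ring].
  - exists c, (Datatypes.S e); split; [simpl; lia|rewrite S_INR; ring].
Qed.

Lemma Lm_endpoint S th w : Lm S th w -> 0 <= proj_sum th w.
Proof.
  intros [_ Hw]; pose proof (walk_in_H_endpoint _ _ _ Hw); rewrite proj_origin in *; lra.
Qed.

Lemma Lm_up_down S th u v n k : In u S -> In v S -> 0 < proj th u -> proj th v <= 0 ->
  0 <= INR n * proj th u + INR k * proj th v -> Lm S th (repeat u n ++ repeat v k).
Proof.
  intros HuS HvS Hu Hv Hend; split.
  - intros s Hs; apply in_app_or in Hs as [Hs|Hs]; apply repeat_spec in Hs; now subst.
  - apply walk_in_H_up_down; rewrite ?proj_origin; lra.
Qed.

Lemma Lm_not_context_free S th u v : In u S -> In v S ->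
  0 < proj th u -> 0 < - proj th v -> irrational (proj th u / - proj th v) ->
  ~ context_free (Lm S th).
Proof.
  intros HuS HvS Ha Hb Hirr [G HG].
  set (a := proj th u) in *; set (b := - proj th v) in *.
  assert (Hv : proj th v = - b) by (unfold b; ring).
  destruct (lincomb_gap a b (rule_width G * pump_length G) Ha Hb Hirr)
    as (d & Hd & Hgap).
  destruct (lincomb_density a b Ha Hb Hirr d Hd (Datatypes.S (pump_length G)))
    as (n & k & HnN & Hnear).
  set (w0 := repeat u n ++ repeat v k).
  assert (Hsum0 : proj_sum th w0 = INR n * a - INR k * b).
  { unfold w0; rewrite proj_sum_app, !proj_sum_repeat, Hv; fold a; ring. }
  assert (Hw0 : Lm S th w0) by (apply Lm_up_down; rewrite ?Hv; fold a; auto; lra).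
  destruct (pumping_lemma G w0) as (x & y & z & t & r & Ew & Hyt & Hwin & Hpump).
  { now apply HG. }
  { unfold w0; rewrite length_app, !repeat_length; lia. }
  assert (Hletters : forall s, In s (y ++ t) -> s = u \/ s = v).
  { intros s Hs; assert (Hs0 : In s w0).
    { rewrite Ew; apply in_app_or in Hs as [Hs|Hs]; rewrite !in_app_iff; tauto. }
    apply in_app_or in Hs0 as [Hs0|Hs0]; apply repeat_spec in Hs0; tauto. }
  destruct (proj_sum_two_letters th u v _ Hletters) as (c & e & Hce & Hsum).
  rewrite Hv in Hsum; fold a in Hsum.
  rewrite !length_app in Hwin; rewrite length_app in Hyt, Hce.
  specialize (Hgap c ltac:(lia) e ltac:(lia) ltac:(lia)).
  assert (Hyt_sum : proj_sum th y + proj_sum th t = INR c * a - INR e * b)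
    by (rewrite proj_sum_app in Hsum; lra).
  assert (Hpumped : forall i,
    0 <= INR n * a - INR k * b + (INR i - 1) * (INR c * a - INR e * b)).
  { intro i; specialize (Hpump i); apply HG, Lm_endpoint in Hpump.
    rewrite <- Hsum0, <- Hyt_sum, Ew.
    rewrite !proj_sum_app, !proj_sum_pow in *; lra. }
  destruct (Rle_or_lt 0 (INR c * a - INR e * b)) as [Hup|Hdown].
  - rewrite Rabs_right in Hgap by lra; specialize (Hpumped 0%nat); simpl in Hpumped; lra.
  - rewrite Rabs_left in Hgap by lra; specialize (Hpumped 2%nat); simpl in Hpumped; lra.
Qed.

Theorem mainTheorem6
  (S : list pt) (HS : NoDup S)
  (thstar gstar : R)
  (Hth : 0 <= thstar <= PI / 2)
  (Hgstar : growth S thstar gstar)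
  (Hmax : forall theta g, 0 <= theta <= PI / 2 -> growth S theta g -> gstar <= g)
  (Hnontriv : exists u v, In u S /\ In v S /\
      0 < proj thstar u /\ 0 < - proj thstar v /\
      irrational (proj thstar u / (- proj thstar v)))
  (Hm : cos thstar <> 0 /\ irrational (tan thstar)) :
  ~ context_free (Lm S thstar).
Proof.
  destruct Hnontriv as (u & v & HuS & HvS & Hu & Hv & Hirr).
  exact (Lm_not_context_free S thstar u v HuS HvS Hu Hv Hirr).
Qed.
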